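(* Let $A$ be a Gorenstein local ring of dimension zero with maximal ideal $M$ and exponent $t+1$, and let $v$ generate the socle: $0:M=M^t=vA$. (i) Let $0\subsetneq I_1\subsetneq\cdots\subsetneq I_t=M$ be a strict chain of Gorenstein ideals of length $t$, and let $v=d_t\cdots d_1$ be a factorization of $v$ with $I_i=0:(d_i\cdots d_1)A$ for $1\le i\le t$. Then each $d_i$ lies in $M\setminus M^2$ and $\mathrm{exponent}(A/I_i)=\mathrm{exponent}(A)-i$. In particular $I_1$ is the annihilator of a minimal generator of $M$ and $\mathrm{exponent}(A/I_1)=\mathrm{exponent}(A)-1$. (ii)(a) If $I$ is a Gorenstein ideal of $A$ with $\mathrm{exponent}(A/I)=\mathrm{exponent}(A)-1$, then the principal ideal $0:I$ is generated by an element $y\in M\setminus M^2$. (b) If $A$ is positively graded with its maximal ideal generated by homogeneous elements of degree $1$ and its degree-zero homogeneous elements forming a field, and $y$ is a homogeneous minimal generator of $M$, then $\mathrm{exponent}(A/(0:yA))=\mathrm{exponent}(A)-1$.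
   Context: The exponent of an artinian local ring with maximal ideal $M$ is $\min\{r\in\mathbb N: M^r=0\}$. A Gorenstein ideal of a local ring $A$ is a proper ideal $I$ such that $A/I$ is Gorenstein. *)

From HB Require Import structures.
From mathcomp Require Import all_boot all_order all_algebra.
Set Implicit Arguments. Unset Strict Implicit. Unset Printing Implicit Defensive.
Import Order.TTheory GRing.Theory Num.Theory.
Local Open Scope ring_scope.

Section CommAlg.
Variable A : comNzRingType.

Definition ideal (I : A -> Prop) : Prop :=
  I 0 /\ (forall x y, I x -> I y -> I (x + y)) /\ (forall a x, I x -> I (a * x)).

Definition gen_by (S : A -> Prop) (z : A) : Prop :=
  exists l : seq (A * A), (forall p, p \in l -> S p.2) /\ z = \sum_(p <- l) p.1 * p.2.

Definition principal (x : A) (z : A) : Prop := exists a, z = a * x.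

Definition prod_ideal (I J : A -> Prop) (z : A) : Prop :=
  exists l : seq (A * A), (forall p, p \in l -> I p.1 /\ J p.2) /\
    z = \sum_(p <- l) p.1 * p.2.

Fixpoint ideal_pow (M : A -> Prop) (n : nat) : A -> Prop :=
  match n with
  | 0 => fun _ => True
  | n'.+1 => prod_ideal M (ideal_pow M n')
  end.

Definition ann_ideal (I : A -> Prop) (z : A) : Prop := forall x, I x -> z * x = 0.

Definition noetherian : Prop :=
  forall I, ideal I -> exists s : seq A, forall z, I z <-> gen_by (fun x => x \in s) z.

Definition local_ring (M : A -> Prop) : Prop :=
  ideal M /\ ~ M 1 /\ (forall x, ~ M x -> exists y, x * y = 1).

Definition is_exponent (M : A -> Prop) (e : nat) : Prop :=
  (forall z, ideal_pow M e z -> z = 0) /\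
  (forall r, (forall z, ideal_pow M r z -> z = 0) -> (e <= r)%N).

(* zero-dimensional Gorenstein local ring with maximal ideal M:
   noetherian local, M nilpotent (dimension zero), and socle 0:M simple,
   i.e. a nonzero principal ideal (= one-dimensional over A/M). *)
Definition gorenstein0 (M : A -> Prop) : Prop :=
  noetherian /\ local_ring M /\ (exists r, forall z, ideal_pow M r z -> z = 0) /\
  exists x, x != 0 /\ forall z, ann_ideal M z <-> principal x z.

Definition minimal_generator (M : A -> Prop) (y : A) : Prop :=
  exists s : seq A, y \in s /\ (forall z, M z <-> gen_by (fun x => x \in s) z) /\
    forall i, (i < size s)%N ->
      ~ (forall z, M z <-> gen_by (fun x => x \in take i s ++ drop i.+1 s) z).

Definition graded (G : nat -> A -> Prop) : Prop :=
  (forall n, G n 0) /\ (forall n x y, G n x -> G n y -> G n (x + y)) /\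
  (forall n x, G n x -> G n (- x)) /\
  (forall m n x y, G m x -> G n y -> G (m + n)%N (x * y)) /\
  (forall z, exists (N : nat) (c : nat -> A), (forall i, G i (c i)) /\ z = \sum_(i < N) c i) /\
  (forall (N : nat) (c : nat -> A), (forall i, G i (c i)) -> \sum_(i < N) c i = 0 ->
     forall i, (i < N)%N -> c i = 0).

End CommAlg.

Definition is_quotient (A B : comNzRingType) (f : {rmorphism A -> B}) (I : A -> Prop) : Prop :=
  (forall b, exists a, f a = b) /\ (forall a, f a = 0 <-> I a).

Definition gorenstein_ideal (A : comNzRingType) (I : A -> Prop) : Prop :=
  ideal I /\ ~ I 1 /\
  exists (B : comNzRingType) (f : {rmorphism A -> B}) (MB : B -> Prop),
    is_quotient f I /\ gorenstein0 MB.

Definition quot_exponent (A : comNzRingType) (I : A -> Prop) (e : nat) : Prop :=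
  exists (B : comNzRingType) (f : {rmorphism A -> B}) (MB : B -> Prop),
    is_quotient f I /\ local_ring MB /\ is_exponent MB e.

From HB Require Import structures.
From mathcomp Require Import all_boot all_order all_algebra ring zify.
From mathcomp Require Import generic_quotient ring_quotient.
From mathcomp Require Import boolp classical_sets.
Import GRing.Theory.
Local Open Scope ring_scope.
Local Open Scope classical_set_scope.
Set Implicit Arguments. Unset Strict Implicit.

(* Since [v] spans the simple socle [M^t], everything is read off factorizations of [v].
   (i) A unit [d i] would make two consecutive ideals of the chain equal (or [I 1 = 0]),
   so every [d i] lies in [M]; then [v = (d 1 ... d i) (d (i+1) ... d t)] with the
   factors in [M^i] and [M^(t-i)], and [v <> 0] forces [d i ∉ M^2] and
   [M^r ⊆ 0 : (d 1 ... d i)] exactly for [r >= t + 1 - i]. Elements of [M \ M^2] are the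
   minimal generators of [M] by Nakayama's lemma.
   (ii)(a) The double annihilator property [0 : (0 : J) = J] is derived by comparing
   lengths: annihilators turn a composition series into one of at most the same length,
   the steps having length at most one because the socle is simple. If [w] spans the socle
   of [A/I], this yields [y] in [0 : I] with [w y <> 0] and [0 : I = yA + M (0 : I)], so
   [0 : I = yA] by Nakayama; and [y ∈ M^2] would give [M^(t-1) ⊆ 0 : (0 : I) = I].
   (ii)(b) A homogeneous minimal generator [y] has degree 1; writing [v = x y] and keeping
   the degree [t - 1] part of [x] shows [v ∈ y M^(t-1)], and the computation of (i) applies. *)

Section Ideals.
Variable A : comNzRingType.
Implicit Types (I J S : A -> Prop) (a b x y z : A).

Lemma ideal0 I : ideal I -> I 0. Proof. by case. Qed.

Lemma idealD I : ideal I -> forall x y, I x -> I y -> I (x + y).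
Proof. by case=> _ []. Qed.

Lemma idealM I : ideal I -> forall a x, I x -> I (a * x).
Proof. by case=> _ []. Qed.

Lemma idealMl I : ideal I -> forall a x, I x -> I (x * a).
Proof. by move=> hI a x hx; rewrite mulrC; apply: idealM. Qed.

Lemma idealB I : ideal I -> forall x y, I x -> I y -> I (x - y).
Proof. by move=> hI x y hx hy; rewrite -mulN1r; apply: idealD => //; apply: idealM. Qed.

Lemma ideal_sum I (T : eqType) (s : seq T) (P : pred T) (F : T -> A) :
  ideal I -> (forall i, i \in s -> P i -> I (F i)) -> I (\sum_(i <- s | P i) F i).
Proof.
move=> hI h; rewrite big_seq_cond; apply: big_ind => [|x y|i /andP [/h]] //.
  exact: ideal0.
exact: idealD.
Qed.

Lemma ideal_set0 : ideal [set (0 : A)].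
Proof. by split; [|split] => [|x y -> ->|a x ->]; rewrite ?addr0 ?mulr0. Qed.

Lemma ideal_setT : ideal [set: A].
Proof. by []. Qed.

Lemma ideal_setI I J : ideal I -> ideal J -> ideal (I `&` J).
Proof.
move=> hI hJ; split; [|split]; first by split; apply: ideal0.
- by move=> x y [? ?] [? ?]; split; apply: idealD.
- by move=> a x [? ?]; split; apply: idealM.
Qed.

Definition add_ideal I J : A -> Prop := fun z => exists x y, [/\ I x, J y & z = x + y].

Lemma ideal_add I J : ideal I -> ideal J -> ideal (add_ideal I J).
Proof.
move=> hI hJ; split; [|split].
- by exists 0, 0; rewrite addr0; split => //; apply: ideal0.
- move=> _ _ [x [y [hx hy ->]]] [x' [y' [hx' hy' ->]]]; exists (x + x'), (y + y').
  by rewrite addrACA; split => //; apply: idealD.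
- move=> a _ [x [y [hx hy ->]]]; exists (a * x), (a * y).
  by rewrite mulrDr; split => //; apply: idealM.
Qed.

Lemma add_ideal_subl I J : ideal J -> I `<=` add_ideal I J.
Proof. by move=> hJ z hz; exists z, 0; rewrite addr0; split => //; apply: ideal0. Qed.

Lemma add_ideal_subr I J : ideal I -> J `<=` add_ideal I J.
Proof. by move=> hI z hz; exists 0, z; rewrite add0r; split => //; apply: ideal0. Qed.

Lemma ideal_prod I J : ideal J -> ideal (prod_ideal I J).
Proof.
move=> hJ; split; [|split].
- by exists [::]; rewrite big_nil.
- move=> x y [l1 [h1 ->]] [l2 [h2 ->]]; exists (l1 ++ l2); split; last by rewrite big_cat.
  by move=> p; rewrite mem_cat => /orP [] ?; [apply: h1|apply: h2].
- move=> a x [l [h ->]]; exists [seq (p.1, a * p.2) | p <- l]; split.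
  + by move=> q /mapP [p /h [? ?] ->]; split => //; apply: idealM.
  + by rewrite big_map mulr_sumr; apply: eq_bigr => p _; rewrite mulrCA.
Qed.

Lemma prod_ideal_mul I J x y : I x -> J y -> prod_ideal I J (x * y).
Proof. by exists [:: (x, y)]; split; [move=> p; rewrite inE => /eqP -> | rewrite big_seq1]. Qed.

Lemma ideal_gen_by S : ideal (gen_by S).
Proof.
split; [|split].
- by exists [::]; rewrite big_nil.
- move=> x y [l1 [h1 ->]] [l2 [h2 ->]]; exists (l1 ++ l2); split; last by rewrite big_cat.
  by move=> p; rewrite mem_cat => /orP [] ?; [apply: h1|apply: h2].
- move=> a x [l [h ->]]; exists [seq (a * p.1, p.2) | p <- l]; split.
  + by move=> q /mapP [p hp ->] /=; apply: h.
  + by rewrite big_map mulr_sumr; apply: eq_bigr => p _; rewrite mulrA.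
Qed.

Lemma gen_by_mem S x : S x -> gen_by S x.
Proof.
by exists [:: (1, x)]; split; [move=> p; rewrite inE => /eqP -> | rewrite big_seq1 mul1r].
Qed.

Lemma gen_by_min S I : ideal I -> S `<=` I -> gen_by S `<=` I.
Proof. by move=> hI hS z [l [h ->]]; apply: ideal_sum => // p /h /hS hp _; apply: idealM. Qed.

Lemma gen_by_mono S S' : S `<=` S' -> gen_by S `<=` gen_by S'.
Proof. by move=> h z [l [hl ->]]; exists l; split => // p /hl /h. Qed.

Lemma ideal_principal x : ideal (principal x).
Proof.
split; [|split]; first by exists 0; rewrite mul0r.
- by move=> a b [c ->] [d ->]; exists (c + d); rewrite mulrDl.
- by move=> a b [c ->]; exists (a * c); rewrite mulrA.
Qed.

Lemma ann_principal x z : ann_ideal (principal x) z <-> z * x = 0.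
Proof.
split => [h | h w [a ->]]; first by apply: h; exists 1; rewrite mul1r.
by rewrite mulrCA h mulr0.
Qed.

Lemma ideal_ann I : ideal (ann_ideal I).
Proof.
split; [|split]; first by move=> x _; rewrite mul0r.
- by move=> a b ha hb x hx; rewrite mulrDl ha ?hb ?addr0.
- by move=> a b hb x hx; rewrite -mulrA hb ?mulr0.
Qed.

Lemma ann_ideal_anti I J : I `<=` J -> ann_ideal J `<=` ann_ideal I.
Proof. by move=> h z hz x /h; apply: hz. Qed.

Lemma ann_setT : ann_ideal [set: A] = [set 0].
Proof.
apply/predeqP => z; split => [h | -> x _]; last by rewrite mul0r.
by rewrite -[z]mulr1; apply: h.
Qed.

Lemma ann_set0 : ann_ideal [set 0] = [set: A].
Proof. by apply/predeqP => z; split => // _ x ->; rewrite mulr0. Qed.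

Definition adjoin I b : A -> Prop := fun z => exists d a, I d /\ z = d + a * b.

Lemma ideal_adjoin I b : ideal I -> ideal (adjoin I b).
Proof.
move=> hI; split; [|split].
- by exists 0, 0; split; [apply: ideal0 | rewrite mul0r addr0].
- move=> x y [d [a [hd ->]]] [d' [a' [hd' ->]]]; exists (d + d'), (a + a').
  by split; [apply: idealD | rewrite mulrDl addrACA].
- move=> c x [d [a [hd ->]]]; exists (c * d), (c * a).
  by split; [apply: idealM | rewrite mulrDr mulrA].
Qed.

Lemma adjoin_sub I b : I `<=` adjoin I b.
Proof. by move=> z hz; exists z, 0; rewrite mul0r addr0. Qed.

Lemma adjoin_mem I b : ideal I -> adjoin I b b.
Proof. by move=> hI; exists 0, 1; rewrite mul1r add0r; split => //; apply: ideal0. Qed.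

Lemma gen_by_nil z : gen_by (fun x => x \in [::]) z -> z = 0.
Proof. by move=> [[|p l] [h ->]]; [rewrite big_nil | have := h p (mem_head _ _)]. Qed.

Lemma gen_by_cons w s y : gen_by (fun x => x \in w :: s) y ->
  exists c, gen_by (fun x => x \in s) (y - c * w).
Proof.
move=> [l [hl ->]]; elim: l hl => [|p l IH] hl.
  by exists 0; rewrite big_nil mul0r subr0; apply: ideal0; apply: ideal_gen_by.
have [c hc] := IH (fun q hq => hl q (@mem_behead _ (p :: l) q hq)).
rewrite big_cons; have := hl p (mem_head _ _); rewrite inE => /orP [/eqP ->|hps].
  by exists (p.1 + c); rewrite mulrDl opprD addrACA subrr add0r.
exists c; rewrite -addrA; apply: idealD (ideal_gen_by _) _ _ _ hc.
by apply: idealM; [apply: ideal_gen_by | apply: gen_by_mem].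
Qed.

End Ideals.

Section Quotient.
Local Open Scope quotient_scope.
Variables (A : comNzRingType) (I : A -> Prop).
Hypotheses (idealI : ideal I) (I_neq1 : ~ I 1).

Definition ideal_pred : pred A := fun a => `[< I a >].

Lemma ideal_pred_closed : idealr_closed ideal_pred.
Proof.
split; first by apply/asboolP; apply: ideal0.
  by apply/asboolP.
by move=> a u w /asboolP hu /asboolP hw; apply/asboolP; apply: idealD => //; apply: idealM.
Qed.

HB.instance Definition _ := isIdealr.Build A ideal_pred ideal_pred_closed.

Definition quot_ring : comNzRingType := {ideal_quot (ideal_pred : idealr A)}.
Definition quot_pi : {rmorphism A -> quot_ring} := \pi_quot_ring.

Lemma quot_piP : is_quotient quot_pi I.
Proof.
split=> [b | a]; first by exists (repr b); exact: reprK.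
rewrite -(rmorph0 quot_pi) /quot_pi; split => [/eqP|].
  by rewrite -Quotient.idealrBE subr0 => /asboolP.
by move=> Ia; apply/eqP; rewrite -Quotient.idealrBE subr0; apply/asboolP.
Qed.

End Quotient.

Lemma exists_quotient (A : comNzRingType) (I : A -> Prop) : ideal I -> ~ I 1 ->
  exists (B : comNzRingType) (f : {rmorphism A -> B}), is_quotient f I.
Proof. by move=> hI hI1; exists (quot_ring hI hI1), (quot_pi hI hI1); apply: quot_piP. Qed.

Section NoetherianInduction.
Variable A : comNzRingType.
Hypothesis A_noetherian : noetherian A.
Implicit Types (C : A -> Prop) (a x y z : A).

Lemma ascending_chain_stationary (J : nat -> A -> Prop) : (forall n, ideal (J n)) ->
  (forall n, J n `<=` J n.+1) -> exists n, J n.+1 `<=` J n.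
Proof.
move=> hJ hJS.
have mono i j : (i <= j)%N -> J i `<=` J j.
  move=> /subnK <-; elim: (j - i)%N => [|k IH] z; first by rewrite add0n.
  by move/IH; rewrite addSn; apply: hJS.
pose U z := exists n, J n z.
have hU : ideal U.
  split; [|split]; first by exists 0%N; apply: ideal0.
  - move=> x y [i hi] [j hj]; exists (maxn i j); apply: idealD => //.
      exact: mono (leq_maxl i j) _ hi.
    exact: mono (leq_maxr i j) _ hj.
  - by move=> a x [i hi]; exists i; apply: idealM.
have [s hs] := A_noetherian hU.
have hsU x : x \in s -> U x by move=> hx; apply/hs; apply: gen_by_mem.
have [n hn] : exists n, forall x, x \in s -> J n x.
  elim: s {hs} hsU => [|x s IH] hsU; first by exists 0%N.
  have [n1 hn1] := IH (fun y hy => hsU y (@mem_behead _ (x :: s) y hy)).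
  have [n2 hn2] := hsU x (mem_head x s).
  exists (maxn n1 n2) => y; rewrite inE => /orP [/eqP -> | hy].
    exact: mono (leq_maxr _ _) _ hn2.
  exact: mono (leq_maxl _ _) _ (hn1 y hy).
by exists n => z hz; apply: gen_by_min (hJ n) hn _ _; apply/hs; exists n.+1.
Qed.

Lemma noetherian_ind (P : (A -> Prop) -> Prop) :
  (forall C, ideal C ->
    (forall C', ideal C' -> C `<=` C' -> (exists2 x, C' x & ~ C x) -> P C') -> P C) ->
  forall C, ideal C -> P C.
Proof.
move=> H C0 hC0; apply: contrapT => hP0.
pose T := {C : A -> Prop | ideal C /\ ~ P C}.
have step (u : T) : {u' : T | sval u `<=` sval u' /\ exists2 x, sval u' x & ~ sval u x}.
  case: u => C [hC hP]; apply: cid; apply: contrapT => hno.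
  apply: (hP); apply: H => // C' hC' hCC' hx.
  by apply: contrapT => hP'; apply: hno; exists (exist _ C' (conj hC' hP')).
pose J n := sval (iter n (fun u : T => sval (step u)) (exist _ C0 (conj hC0 hP0))).
have hJS n : J n `<=` J n.+1 /\ exists2 x, J n.+1 x & ~ J n x.
  by rewrite /J /=; case: (step _) => u' hu'.
have hJ n : ideal (J n) by rewrite /J; case: (iter n _ _) => u [].
have [n hn] := ascending_chain_stationary hJ (fun n => (hJS n).1).
by have [x hx hxn] := (hJS n).2; apply: hxn; apply: hn.
Qed.

End NoetherianInduction.

Lemma mem_skip_nth (T : eqType) (x0 u : T) (s : seq T) i : (i < size s)%N -> u \in s ->
  u \in take i s ++ drop i.+1 s \/ u = nth x0 s i.
Proof.
move=> hi; rewrite -{1}(cat_take_drop i s) (drop_nth x0 hi) mem_cat inE.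
case/orP => [h | /orP [/eqP -> | h]]; [left | by right | left]; by rewrite mem_cat h ?orbT.
Qed.

Lemma skip_nth_sub (T : eqType) (u : T) (s : seq T) i : u \in take i s ++ drop i.+1 s -> u \in s.
Proof. by rewrite mem_cat => /orP [/mem_take | /mem_drop]. Qed.

Lemma size_skip_nth (T : Type) (s : seq T) i :
  (i < size s)%N -> size (take i s ++ drop i.+1 s) = (size s).-1.
Proof.
move=> hi; rewrite size_cat size_take hi size_drop.
by move: hi; case: (size s) => // n; rewrite ltnS subSS => /subnKC.
Qed.

Section LocalRing.
Variables (A : comNzRingType) (M : A -> Prop).
Hypotheses (ideal_M : ideal M) (M_neq1 : ~ M 1).
Hypothesis unit_notin_M : forall x, ~ M x -> exists y, x * y = 1.
Implicit Types (C D E F I J K L S : A -> Prop) (a b c m x y z : A).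
Local Notation "''M^' n" := (ideal_pow M n%N) (at level 8, n at level 2, format "''M^' n").

Lemma ideal_pow_ideal n : ideal 'M^n.
Proof. by elim: n => [|n IH] //=; apply: ideal_prod. Qed.

Lemma ideal_powS n x y : M x -> 'M^n y -> 'M^n.+1 (x * y).
Proof. exact: prod_ideal_mul. Qed.

Lemma ideal_pow1 z : M z <-> 'M^1 z.
Proof.
split=> [h | [l [h ->]]]; first by rewrite -[z]mulr1; apply: ideal_powS.
by apply: ideal_sum => // p /h [hp _] _; exact: idealMl.
Qed.

Lemma ideal_pow_mul i j x y : 'M^i x -> 'M^j y -> 'M^(i + j) (x * y).
Proof.
elim: i x => [|i IH] x /=; first by move=> _ hy; apply: idealM => //; apply: ideal_pow_ideal.
move=> [l [h ->]] hy; rewrite mulr_suml; apply: ideal_sum => [|p /h [hp1 hp2] _].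
  exact: (ideal_pow_ideal (i.+1 + j)).
by rewrite -mulrA; apply: ideal_powS => //; apply: IH.
Qed.

Lemma ideal_pow_anti i j : (i <= j)%N -> 'M^j `<=` 'M^i.
Proof.
move=> /subnK <-; elim: (j - i)%N => [|k IH] z; first by rewrite add0n.
rewrite addSn => -[l [h ->]]; apply: IH; apply: ideal_sum => [|p /h [_ ?] _].
  exact: ideal_pow_ideal.
by apply: idealM => //; apply: ideal_pow_ideal.
Qed.

Lemma prod_ideal_pow (F : nat -> A) (i k : nat) : (forall j, (i <= j < i + k)%N -> M (F j)) ->
  'M^k (\prod_(i <= j < i + k) F j).
Proof.
elim: k => [|k IH] hF //; rewrite addnS big_nat_recr ?leq_addr //= mulrC.
apply: ideal_powS; first by apply: hF; rewrite leq_addr addnS ltnS /=.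
by apply: IH => j /andP [ij jik]; apply: hF; rewrite ij addnS ltnW.
Qed.

Lemma proper_ideal_sub_max I : ideal I -> ~ I 1 -> I `<=` M.
Proof.
move=> hI hI1 x hx; apply: contrapT => /unit_notin_M [y hy].
by apply: hI1; rewrite -hy; apply: idealMl.
Qed.

Lemma unit_notin_max x y : x * y = 1 -> ~ M x.
Proof. by move=> h hx; apply: M_neq1; rewrite -h; apply: idealMl. Qed.

(* [b M ⊆ C]: the class of [b] lies in the socle of [A/C]. *)
Definition socle_mod C b := forall m, M m -> C (b * m).

(* [simple_chain C D n]: a composition series of length [n] from [C] up to [D],
   each step adjoining an element of the socle of the previous quotient. *)
Inductive simple_chain C : (A -> Prop) -> nat -> Prop :=
| simple_chain0 : simple_chain C C 0
| simple_chainS D b n : simple_chain C D n -> ~ D b -> socle_mod D b ->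
    simple_chain C (adjoin D b) n.+1.

Inductive strict_chain E : (A -> Prop) -> nat -> Prop :=
| strict_chain0 : strict_chain E E 0
| strict_chainS F G n : strict_chain E F n -> ideal G -> F `<=` G ->
    (exists2 x, G x & ~ F x) -> strict_chain E G n.+1.

Lemma simple_chain_cat C D E i j :
  simple_chain C D i -> simple_chain D E j -> simple_chain C E (i + j).
Proof.
move=> hCD; elim=> [|E' b j' _ IH hb hbM]; first by rewrite addn0.
by rewrite addnS; apply: simple_chainS.
Qed.

Lemma simple_chain_sub C D n : simple_chain C D n -> C `<=` D.
Proof. by elim=> [|D' b n' _ IH _ _] z // /IH; apply: adjoin_sub. Qed.

Lemma simple_chain_ideal C D n : ideal C -> simple_chain C D n -> ideal D.
Proof. by move=> hC; elim=> // D' b n' _ IH _ _; apply: ideal_adjoin. Qed.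

Lemma simple_chain_strict C D n : ideal C -> simple_chain C D n -> strict_chain C D n.
Proof.
move=> hC; elim=> [|D' b n' h IH hb _]; first exact: strict_chain0.
have hD := simple_chain_ideal hC h.
apply: (strict_chainS IH); [exact: ideal_adjoin | exact: adjoin_sub |].
by exists b => //; apply: adjoin_mem.
Qed.

Lemma strict_chain_sub E F n : strict_chain E F n -> E `<=` F.
Proof. by elim=> [|F' G n' _ IH _ hFG _] z // /IH /hFG. Qed.

Lemma strict_chain_ideal E F n : ideal E -> strict_chain E F n -> ideal F.
Proof. by move=> hE; elim. Qed.

Lemma strict_chain_witness E F n :
  strict_chain E F n -> (0 < n)%N -> exists2 x, F x & ~ E x.
Proof.
case=> // F0 G n0 h _ _ [x hx hxF] _; exists x => // /(strict_chain_sub h).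
exact: hxF.
Qed.

Lemma adjoin_socle_cases D b L : ideal D -> socle_mod D b -> ideal L ->
  D `<=` L -> L `<=` adjoin D b -> L `<=` D \/ adjoin D b `<=` L.
Proof.
move=> hD hbM hL hDL hLD.
have [[x hx hxD]|/forallPNP hno] := pselect (exists2 x, L x & ~ D x); last first.
  by left => z /hno /contrapT.
right; have [d [a [hd hxe]]] := hLD x hx.
have [a' ha'] : exists a', a * a' = 1.
  apply: unit_notin_M => haM; apply: hxD; rewrite hxe.
  by apply: idealD => //; rewrite mulrC; apply: hbM.
have hbL : L b.
  have -> : b = a' * (x - d) by rewrite hxe [d + _]addrC addrK mulrA [a' * a]mulrC ha' mul1r.
  by apply: idealM => //; apply: idealB => //; apply: hDL.
by move=> z [d0 [c [hd0 ->]]]; apply: idealD => //; [apply: hDL | apply: idealM].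
Qed.

Lemma strict_step_cap D b F G x : ideal D -> socle_mod D b -> ideal F -> ideal G ->
  F `<=` G -> G `<=` adjoin D b -> G x -> ~ F x -> G `&` D `<=` F -> F `<=` D /\ ~ G `<=` D.
Proof.
move=> hD hbM hF hG hFG hGD hGx hFx hGDF.
pose L := add_ideal F D.
have hxL : ~ L x.
  move=> [f [d [hf hd hxe]]]; apply: hFx; rewrite hxe; apply: idealD => //.
  apply: hGDF; split => //.
  have -> : d = x - f by rewrite hxe [f + _]addrC addrK.
  by apply: idealB => //; apply: hFG.
have hLD : L `<=` adjoin D b.
  move=> _ [f [d [hf hd ->]]]; apply: idealD; [exact: ideal_adjoin | exact: hGD _ (hFG _ hf) |].
  exact: adjoin_sub.
have [hLsD|hDbL] := adjoin_socle_cases hD hbM (ideal_add hF hD) (add_ideal_subr hF) hLD.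
  by split=> [z hz | hGsD]; [apply/hLsD/add_ideal_subl | apply/hxL/add_ideal_subr/hGsD].
by case: hxL; apply/hDbL/hGD.
Qed.

Lemma strict_chain_setI D b E F n : ideal D -> ideal E -> socle_mod D b ->
  strict_chain E F n -> F `<=` adjoin D b ->
  exists k, [/\ strict_chain (E `&` D) (F `&` D) k, (n <= k.+1)%N & (F `<=` D -> (n <= k)%N)].
Proof.
move=> hD hE hbM h; elim: h => [|F0 G n0 h IH hG hFG [x hGx hFx]] hsub.
  by exists 0%N; split => //; apply: strict_chain0.
have [k [hk hn1 hn2]] := IH (fun z hz => hsub z (hFG z hz)).
have [[y [hyG hyD] hyF]|/forallPNP hno] := pselect (exists2 y, G y /\ D y & ~ F0 y).
  exists k.+1; split => // [|hGD]; last by apply: hn2 => z /hFG /hGD.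
  apply: (strict_chainS hk); first exact: ideal_setI.
    by move=> z [h1 h2]; split => //; apply: hFG.
  by exists y => // -[].
have hGDF : G `&` D `<=` F0 by move=> z [h1 h2]; exact: contrapT (hno z (conj h1 h2)).
have [hF0D hGD] := strict_step_cap hD hbM (strict_chain_ideal hE h) hG hFG hsub hGx hFx hGDF.
have -> : G `&` D = F0 `&` D.
  by apply/predeqP => z; split=> [[h1 h2] | [h1 h2]]; split => //; [apply: hGDF | apply: hFG].
by exists k; split => //; apply: hn2.
Qed.

Lemma strict_chain_le_simple C D k : simple_chain C D k -> ideal C ->
  forall E F n, strict_chain E F n -> ideal E -> C `<=` E -> F `<=` D -> (n <= k)%N.
Proof.
elim=> [|D' b k0 h IH hb hbM] hC E F n hEF hE hCE hFD.
  case: n hEF => // n /strict_chain_witness [//|x hx hxE].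
  by case: hxE; apply/hCE/hFD.
have [k1 [hk hn1 _]] := strict_chain_setI (simple_chain_ideal hC h) hE hbM hEF hFD.
apply: leq_trans hn1 _; rewrite ltnS; apply: IH hk _ _ _ => //.
  exact: ideal_setI (simple_chain_ideal hC h).
by move=> z hz; split; [apply: hCE | apply: simple_chain_sub h _ hz].
Qed.

Section QuotientExponent.
Variables (B : comNzRingType) (f : {rmorphism A -> B}).
Implicit Types (u w : B).

Definition image_max : B -> Prop := fun u => exists2 a, M a & f a = u.

Lemma ideal_pow_image n a : 'M^n a -> ideal_pow image_max n (f a).
Proof.
elim: n a => [|n IH] a //= [l [h ->]].
exists [seq (f p.1, f p.2) | p <- l]; split.
  by move=> q /mapP [p /h [hp1 hp2] ->]; split; [exists p.1 | apply: IH].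
by rewrite rmorph_sum big_map; apply: eq_bigr => p _; rewrite rmorphM.
Qed.

Hypothesis f_surj : forall u, exists a, f a = u.

Lemma ideal_pow_preimage n u : ideal_pow image_max n u -> exists2 a, 'M^n a & f a = u.
Proof.
elim: n u => [|n IH] u /=; first by have [a ha] := f_surj u; exists a.
move=> [l [h ->]]; elim: l h => [|p l IHl] h.
  by exists 0; rewrite ?big_nil ?rmorph0 //; apply: (ideal0 (ideal_pow_ideal n.+1)).
have [[a1 ha1 e1] /IH [a2 ha2 e2]] := h p (mem_head _ _).
have [a' ha' e'] : exists2 a, 'M^n.+1 a & f a = \sum_(j <- l) j.1 * j.2.
  by apply: IHl => q hq; apply: h; rewrite inE hq orbT.
exists (a1 * a2 + a'); last by rewrite big_cons rmorphD rmorphM e1 e2 e'.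
by apply: (idealD (ideal_pow_ideal n.+1)) => //; apply: ideal_powS.
Qed.

Variable I : A -> Prop.
Hypotheses (idealI : ideal I) (I_neq1 : ~ I 1) (f_ker : forall a, f a = 0 <-> I a).

Lemma local_image_max : local_ring image_max.
Proof.
split; [split; [|split] | split].
- by exists 0; rewrite ?rmorph0 //; apply: ideal0.
- by move=> _ _ [a ha <-] [a' ha' <-]; exists (a + a'); rewrite ?rmorphD //; apply: idealD.
- move=> c _ [a ha <-]; have [c' <-] := f_surj c.
  by exists (c' * a); rewrite ?rmorphM //; apply: idealM.
- move=> [a haM hfa]; have hIa : I (1 - a) by apply/f_ker; rewrite rmorphB rmorph1 hfa subrr.
  apply: M_neq1; rewrite -(subrK a 1); apply: idealD => //.
  exact: proper_ideal_sub_max idealI I_neq1 _ hIa.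
- move=> u hu; have [a ha] := f_surj u.
  have [a' ha'] : exists a', a * a' = 1 by apply: unit_notin_M => haM; apply: hu; exists a.
  by exists (f a'); rewrite -ha -rmorphM ha' rmorph1.
Qed.

Lemma quotient_max_ideal MB : local_ring MB -> MB = image_max.
Proof.
move=> [hMB [hMB1 hMBu]]; apply/predeqP => u; split.
  move=> hu; have [a ha] := f_surj u; exists a => //.
  apply: contrapT => /unit_notin_M [a' ha']; apply: hMB1.
  by rewrite -(rmorph1 f) -ha' rmorphM ha; apply: idealMl.
move=> [a haM <-]; apply: contrapT => /hMBu [c hc].
have [c' hc'] := f_surj c.
have hIa : I (a * c' - 1) by apply/f_ker; rewrite rmorphB rmorphM hc' hc rmorph1 subrr.
apply: M_neq1; have -> : 1 = a * c' - (a * c' - 1) by rewrite opprB addrC subrK.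
by apply: idealB; [| apply: idealMl | apply: proper_ideal_sub_max idealI I_neq1 _ hIa].
Qed.

End QuotientExponent.

Lemma quot_exponentP I e : ideal I -> ~ I 1 ->
  quot_exponent I e <-> 'M^e `<=` I /\ (forall r, 'M^r `<=` I -> (e <= r)%N).
Proof.
move=> hI hI1; split.
  move=> [B [f [MB [[f_surj f_ker] [hloc [he hmin]]]]]].
  rewrite (quotient_max_ideal f_surj hI hI1 f_ker hloc) in he hmin.
  split=> [a /(ideal_pow_image f) /he /f_ker // | r hr].
  by apply: hmin => _ /(ideal_pow_preimage f_surj) [a /hr /f_ker ha <-].
move=> [he hmin]; have [B [f [f_surj f_ker]]] := exists_quotient hI hI1.
exists B, f, (image_max f); split=> //; split; first exact: (local_image_max f_surj hI hI1 f_ker).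
split=> [_ /(ideal_pow_preimage f_surj) [a /he /f_ker ha <-] // | r hr].
by apply: hmin => a /(ideal_pow_image f) /hr /f_ker.
Qed.

Definition gen_add_pow S k := add_ideal (gen_by S) 'M^k.

Lemma ideal_gen_add_pow S k : ideal (gen_add_pow S k).
Proof. exact: ideal_add (ideal_gen_by S) (ideal_pow_ideal k). Qed.

Lemma gen_add_pow_gen S k : gen_by S `<=` gen_add_pow S k.
Proof. exact: add_ideal_subl (ideal_pow_ideal k). Qed.

Lemma gen_add_pow_pow S k : 'M^k `<=` gen_add_pow S k.
Proof. exact: add_ideal_subr (ideal_gen_by S). Qed.

Lemma gen_add_pow_min S S' k : S `<=` gen_add_pow S' k -> gen_add_pow S k `<=` gen_add_pow S' k.
Proof.
move=> h _ [g [m [hg hm ->]]]; apply: idealD; first exact: ideal_gen_add_pow.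
  exact: gen_by_min (ideal_gen_add_pow S' k) h _ hg.
exact: gen_add_pow_pow.
Qed.

Lemma gen_add_pow_succ S k : M `<=` gen_add_pow S 2 -> 'M^k.+1 `<=` gen_add_pow S k.+2.
Proof.
move=> hM _ [l [hl ->]]; apply: ideal_sum => [|p /hl [/hM hp1 hp2] _].
  exact: ideal_gen_add_pow.
have [g [m [hg hm ->]]] := hp1; rewrite mulrDl.
apply: idealD; first exact: ideal_gen_add_pow.
  by apply: gen_add_pow_gen; apply: idealMl => //; apply: ideal_gen_by.
by apply: gen_add_pow_pow; rewrite -add2n; apply: ideal_pow_mul.
Qed.

Lemma exchange_generator s y : (forall w, w \in s -> M w) ->
  gen_by (fun x => x \in s) y -> ~ 'M^2 y ->
  exists2 j, (j < size s)%N &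
    gen_add_pow (fun x => x \in y :: (take j s ++ drop j.+1 s)) 2 (nth 0 s j).
Proof.
elim: s y => [|w s IH] y hsM hy hy2.
  by case: hy2; rewrite (gen_by_nil hy); apply: ideal0; apply: ideal_pow_ideal.
have [c hc] := gen_by_cons hy.
have hgen := ideal_gen_by (fun x => x \in y :: (take 0 (w :: s) ++ drop 1 (w :: s))).
have [hcM|/unit_notin_M [c' hc']] := pselect (M c); last first.
  exists 0%N => //; apply: gen_add_pow_gen.
  have -> : w = c' * y - c' * (y - c * w).
    by rewrite -mulrBr opprB addrC subrK mulrA [c' * c]mulrC hc' mul1r.
  apply: idealB => //; apply: idealM => //; first by apply: gen_by_mem; apply: mem_head.
  by move: hc; apply: gen_by_mono => x hx; rewrite /= drop0 inE hx orbT.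
have hcw : 'M^2 (c * w) by apply: (@ideal_pow_mul 1 1); apply/ideal_pow1 => //; apply/hsM/mem_head.
have hy' : ~ 'M^2 (y - c * w).
  by move=> h; apply: hy2; rewrite -(subrK (c * w) y); apply: idealD => //; apply: ideal_pow_ideal.
have [j hj hN] := IH _ (fun u hu => hsM u (@mem_behead _ (w :: s) u hu)) hc hy'.
exists j.+1 => //; move: hN; apply: gen_add_pow_min => u; rewrite inE => /orP [/eqP -> | hu].
  apply: gen_add_pow_gen; apply: idealB; first exact: ideal_gen_by.
    by apply: gen_by_mem; apply: mem_head.
  by apply: idealM; [apply: ideal_gen_by | apply: gen_by_mem; rewrite !inE eqxx orbT].
by apply: gen_add_pow_gen; apply: gen_by_mem; rewrite !inE hu !orbT.
Qed.

Section Nilpotent.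
Variable t : nat.
Hypothesis ideal_pow_eq0 : forall z, 'M^t.+1 z -> z = 0.

Lemma exists_socle_mod C D a : ideal C -> ideal D -> D a -> ~ C a ->
  exists b, [/\ D b, ~ C b & socle_mod C b].
Proof.
move=> hC hD hDa hCa.
suff: forall n, (forall m, 'M^n m -> C (m * a)) -> exists b, [/\ D b, ~ C b & socle_mod C b].
  by apply; move=> m /ideal_pow_eq0 ->; rewrite mul0r; apply: ideal0.
elim=> [|n IH] h; first by case: hCa; rewrite -[a]mul1r; apply: h.
have [[m hm hma]|] := pselect (exists2 m, 'M^n m & ~ C (m * a)); last first.
  by move/forallPNP => hn; apply: IH => m /hn /contrapT.
exists (m * a); split => //; first exact: idealM.
by move=> x hx; rewrite mulrAC; apply: h; rewrite mulrC; apply: ideal_powS.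
Qed.

Lemma nakayama_gen S : M `<=` gen_add_pow S 2 -> M `<=` gen_by S.
Proof.
move=> hM; have hMk k : M `<=` gen_add_pow S k.+1.
  elim: k => [|k IH] z hz; first by apply: gen_add_pow_pow; apply/ideal_pow1.
  have [g [m [hg hm ->]]] := IH z hz.
  apply: (idealD (ideal_gen_add_pow S k.+2)); first exact: gen_add_pow_gen.
  exact: gen_add_pow_succ.
by move=> z /(hMk t) [g [m [hg /ideal_pow_eq0 -> ->]]]; rewrite addr0.
Qed.

Lemma nakayama_principal K y : ideal K -> K `<=` adjoin (prod_ideal M K) y ->
  K `<=` principal y.
Proof.
move=> hK hKy.
have hKn n : K `<=` adjoin (prod_ideal 'M^n K) y.
  elim: n => [|n IH] k hk.
    by exists k, 0; rewrite mul0r addr0; split => //; rewrite -[k]mul1r; apply: prod_ideal_mul.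
  have hadj := ideal_adjoin y (ideal_prod 'M^n.+1 hK).
  have [_ [a [[l [hl ->]] ->]]] := IH k hk.
  apply: idealD => //; last by apply: idealM => //; apply: adjoin_mem; apply: ideal_prod.
  apply: ideal_sum => // p /hl [hp1 /hKy [_ [a2 [[l2 [hl2 ->]] ->]]]] _.
  rewrite mulrDr mulrA; apply: idealD => //; last first.
    by apply: idealM => //; apply: adjoin_mem; apply: ideal_prod.
  apply: adjoin_sub; rewrite mulr_sumr; apply: ideal_sum; first exact: ideal_prod.
  move=> q /hl2 [hq1 hq2] _; rewrite mulrA; apply: prod_ideal_mul => //.
  by rewrite mulrC; apply: ideal_powS.
move=> k /(hKn t.+1) [_ [a [[l [hl ->]] ->]]]; exists a.
by rewrite big1_seq ?add0r // => p /andP [_ /hl [/ideal_pow_eq0 -> _]]; rewrite mul0r.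
Qed.

Lemma minimal_generator_notin_sq y : minimal_generator M y -> M y /\ ~ 'M^2 y.
Proof.
move=> [s [hys [hgen hmin]]].
have hyM : M y by apply/hgen; apply: gen_by_mem.
split => // hy2; have hi : (index y s < size s)%N by rewrite index_mem.
apply: (hmin _ hi) => z; split; last first.
  by apply: gen_by_min => // u /skip_nth_sub hu; apply/hgen; apply: gen_by_mem.
move: z; apply: nakayama_gen => z /hgen; apply: gen_by_min; first exact: ideal_gen_add_pow.
move=> u hu; case: (mem_skip_nth 0 hi hu) => [h | ->].
  by apply: gen_add_pow_gen; apply: gen_by_mem.
by rewrite nth_index //; apply: gen_add_pow_pow.
Qed.

Section Noetherian.
Hypothesis A_noetherian : noetherian A.

Lemma exists_simple_chain C D : ideal C -> ideal D -> C `<=` D -> exists n, simple_chain C D n.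
Proof.
move=> hC hD; move: C hC; apply: (noetherian_ind A_noetherian) => C hC IH hCD.
have [[a ha hCa]|/forallPNP hno] := pselect (exists2 a, D a & ~ C a); last first.
  have -> : D = C by apply/predeqP => z; split=> [/hno /contrapT | /hCD].
  by exists 0%N; apply: simple_chain0.
have [b [hb hCb hbM]] := exists_socle_mod hC hD ha hCa.
have [n hn] : exists n, simple_chain (adjoin C b) D n.
  apply: IH; [exact: ideal_adjoin | exact: adjoin_sub | by exists b => //; apply: adjoin_mem |].
  by move=> _ [d [c [hd ->]]]; apply: idealD => //; [apply: hCD | apply: idealM].
exists (1 + n)%N; apply: simple_chain_cat hn; apply: simple_chainS => //; exact: simple_chain0.
Qed.

Lemma minimal_generator_of_gen y (s : seq A) : ~ 'M^2 y -> y \in s ->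
  (forall z, M z <-> gen_by (fun x => x \in s) z) -> minimal_generator M y.
Proof.
move=> hy2; move: {2}(size s) (leqnn (size s)) => n; elim: n s => [|n IH] s hsz hys hgen.
  by move: hsz hys; rewrite leqn0 => /nilP ->.
have [hmin|/existsNP [i /not_implyP [hi /contrapT hgi]]] := pselect (forall i, (i < size s)%N ->
    ~ (forall z, M z <-> gen_by (fun x => x \in take i s ++ drop i.+1 s) z)).
  by exists s.
set s' := take i s ++ drop i.+1 s in hgi.
have hsz' : (size s' <= n)%N.
  by rewrite size_skip_nth // -ltnS prednK // (leq_ltn_trans (leq0n i) hi).
have hs'M w : w \in s' -> M w by move=> hw; apply/hgi; apply: gen_by_mem.
have [hys' | hys'] := boolP (y \in s'); first exact: IH hsz' hys' hgi.
have hyM : M y by apply/hgen; apply: gen_by_mem.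
have [j hj hN] := exchange_generator hs'M (proj1 (hgi y) hyM) hy2.
apply: (IH (y :: (take j s' ++ drop j.+1 s'))); [|exact: mem_head|].
  by rewrite /= size_skip_nth // prednK // (leq_ltn_trans (leq0n j) hj).
move=> z; split; last first.
  by apply: gen_by_min => // u; rewrite inE => /orP [/eqP -> // | /skip_nth_sub /hs'M].
move: z; apply: nakayama_gen => z /hgi; apply: gen_by_min; first exact: ideal_gen_add_pow.
move=> u hu; case: (mem_skip_nth 0 hj hu) => [h | -> //].
by apply: gen_add_pow_gen; apply: gen_by_mem; rewrite inE h orbT.
Qed.

Lemma notin_sq_minimal_generator y : M y -> ~ 'M^2 y -> minimal_generator M y.
Proof.
move=> hyM hy2; have [s hs] := A_noetherian ideal_M.
apply: (@minimal_generator_of_gen y (y :: s)) => // [|z]; first exact: mem_head.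
split=> [/hs | ]; first by apply: gen_by_mono => x hx; rewrite inE hx orbT.
by apply: gen_by_min => // u; rewrite inE => /orP [/eqP -> // | hu]; apply/hs; apply: gen_by_mem.
Qed.

Section Socle.
Variable v : A.
Hypotheses (socleE : forall z, ann_ideal M z <-> principal v z) (v_neq0 : v <> 0).

Lemma socle_gen_max m : M m -> v * m = 0.
Proof. by apply: (proj2 (socleE v)); exists 1; rewrite mul1r. Qed.

Lemma unit_of_mul_socle c : c * v <> 0 -> exists c', c * c' = 1.
Proof. by move=> h; apply: unit_notin_M => hc; apply: h; rewrite mulrC; apply: socle_gen_max. Qed.

Lemma socle_gen_mem I : ideal I -> (exists z, I z /\ z <> 0) -> I v.
Proof.
move=> hI [z [hz hz0]].
have [b [hb hb0 hbM]] := exists_socle_mod (ideal_set0 A) hI hz hz0.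
have [c hc] := proj1 (socleE b) hbM.
have [c' hc'] : exists c', c * c' = 1 by apply: unit_of_mul_socle; rewrite -hc.
have -> : v = c' * b by rewrite hc mulrA [c' * c]mulrC hc' mul1r.
exact: idealM.
Qed.

Lemma ann_adjoin D b z : ann_ideal D z -> z * b = 0 -> ann_ideal (adjoin D b) z.
Proof. by move=> hz hzb _ [d [a [hd ->]]]; rewrite mulrDr hz // mulrCA hzb mulr0 addr0. Qed.

Lemma socle_mod_ann_adjoin D b z : ann_ideal D z -> socle_mod D b ->
  socle_mod (ann_ideal (adjoin D b)) z.
Proof.
move=> hz hbM m hm _ [d [a [hd ->]]].
have -> : z * m * (d + a * b) = m * (z * d) + a * (z * (b * m)) by ring.
by rewrite hz // hz ?mulr0 ?addr0 //; apply: hbM.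
Qed.

(* Both [z' b] and [z b] lie in the socle [vA], and [z b] generates it. *)
Lemma ann_adjoin_step D b z : socle_mod D b -> ann_ideal D z -> z * b <> 0 ->
  ann_ideal D = adjoin (ann_ideal (adjoin D b)) z.
Proof.
move=> hbM hz hzb; apply/predeqP => z'; split; last first.
  move=> [u [a [hu ->]]]; apply: (idealD (ideal_ann D)); last exact: (idealM (ideal_ann D)).
  exact: ann_ideal_anti (@adjoin_sub _ D b) _ hu.
move=> hz'.
have socle_mul y : ann_ideal D y -> principal v (y * b).
  by move=> hy; apply/socleE => m hm; rewrite -mulrA; apply: hy; apply: hbM.
have [al hal] := socle_mul z' hz'; have [be hbe] := socle_mul z hz.
have [be' hbe'] : exists be', be * be' = 1 by apply: unit_of_mul_socle; rewrite -hbe.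
exists (z' - al * be' * z), (al * be'); split; last by rewrite subrK.
apply: ann_adjoin; first by apply: (idealB (ideal_ann D)) => //; apply: (idealM (ideal_ann D)).
have -> : (z' - al * be' * z) * b = z' * b - al * be' * (z * b) by ring.
by rewrite hal hbe mulrA -(mulrA al) [be' * be]mulrC hbe' mulr1 subrr.
Qed.

Lemma ann_simple_chain C F n : ideal C -> simple_chain C F n ->
  exists2 k, simple_chain (ann_ideal F) (ann_ideal C) k & (k <= n)%N.
Proof.
move=> hC; elim=> [|D b n0 h [k hk hkn] hb hbM]; first by exists 0%N => //; apply: simple_chain0.
have [[z hz hzb]|/forallPNP hno] := pselect (exists2 z, ann_ideal D z & z * b <> 0).
  exists (1 + k)%N; last by rewrite add1n.
  apply: simple_chain_cat hk; rewrite (ann_adjoin_step hbM hz hzb).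
  apply: simple_chainS; [exact: simple_chain0 | | exact: socle_mod_ann_adjoin].
  by move=> hzD; apply: hzb; apply: hzD; apply: adjoin_mem; apply: simple_chain_ideal h.
have -> : ann_ideal (adjoin D b) = ann_ideal D.
  apply/predeqP => z; split; first exact: (ann_ideal_anti (@adjoin_sub _ D b)).
  by move=> hz; apply: ann_adjoin hz (contrapT (hno z hz)).
by exists k => //; apply: leqW.
Qed.

(* Otherwise [0 : (J + bA) = 0 : J], and dualizing a composition series of [A]
   through [J ⊂ J + bA] would give a strictly shorter composition series of [A]. *)
Lemma ann_adjoin_socle J b : ideal J -> ~ J b -> socle_mod J b ->
  exists2 z, ann_ideal J z & z * b <> 0.
Proof.
move=> hJ hb hbM; apply: contrapT => /forallPNP hno.
have eqA : ann_ideal (adjoin J b) = ann_ideal J.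
  apply/predeqP => z; split; first exact: (ann_ideal_anti (@adjoin_sub _ J b)).
  by move=> hz; apply: ann_adjoin hz (contrapT (hno z hz)).
have hJb := ideal_adjoin b hJ.
have [p hp] : exists p, simple_chain [set 0] J p.
  by apply: (exists_simple_chain (ideal_set0 A) hJ) => _ ->; apply: ideal0.
have [q hq] := exists_simple_chain hJb (ideal_setT A) (fun _ _ => Logic.I).
have [p1 hp1 hp1p] := ann_simple_chain (ideal_set0 A) hp.
have [q1 hq1 hq1q] := ann_simple_chain hJb hq.
rewrite ann_set0 in hp1; rewrite eqA ann_setT in hq1.
have hlong := simple_chain_cat (simple_chainS hp hb hbM) hq.
have := strict_chain_le_simple (simple_chain_cat hq1 hp1) (ideal_set0 A)
  (simple_chain_strict (ideal_set0 A) hlong) (ideal_set0 A) (fun _ h => h) (fun _ h => h).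
move=> /leq_trans /(_ (leq_add hq1q hp1p)).
by rewrite addSn addnC ltnn.
Qed.

Lemma ann_ann_sub J : ideal J -> ann_ideal (ann_ideal J) `<=` J.
Proof.
move=> hJ a ha; apply: contrapT => hJa.
have [b [[d [c [hd ->]]] hJb hbM]] :=
  exists_socle_mod hJ (ideal_adjoin a hJ) (adjoin_mem a hJ) hJa.
have [z hz hzb] := ann_adjoin_socle hJ hJb hbM.
by apply: hzb; rewrite mulrDr hz // add0r mulrCA [z * a]mulrC ha // mulr0.
Qed.

Hypothesis pow_top_socleE : forall z, 'M^t z <-> principal v z.

Section Graded.
Variable G : nat -> A -> Prop.
Hypothesis gradedG : graded G.

Lemma graded0 n : G n 0. Proof. by case: gradedG. Qed.

Lemma gradedD n x y : G n x -> G n y -> G n (x + y).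
Proof. by case: gradedG => _ [h _]; apply: h. Qed.

Lemma gradedN n x : G n x -> G n (- x).
Proof. by case: gradedG => _ [_ [h _]]; apply: h. Qed.

Lemma gradedM i j x y : G i x -> G j y -> G (i + j)%N (x * y).
Proof. by case: gradedG => _ [_ [_ [h _]]]; apply: h. Qed.

Lemma graded_sum n (T : eqType) (s : seq T) (P : pred T) (F : T -> A) :
  (forall i, i \in s -> P i -> G n (F i)) -> G n (\sum_(i <- s | P i) F i).
Proof.
move=> h; rewrite big_seq_cond; apply: big_ind => [|x y|i /andP [/h]] //.
  exact: graded0.
exact: gradedD.
Qed.

Lemma graded_direct n (c : nat -> A) : (forall i, G i (c i)) -> \sum_(i < n) c i = 0 ->
  forall i, (i < n)%N -> c i = 0.
Proof. by case: gradedG => _ [_ [_ [_ [_ h]]]]; apply: h. Qed.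

Definition homog_seq (l : seq (A * nat)) := forall q, q \in l -> G q.2 q.1.

Lemma homog_decomp z : exists2 l, homog_seq l & z = \sum_(q <- l) q.1.
Proof.
case: gradedG => _ [_ [_ [_ [/(_ z) [n [c [hc ->]]] _]]]].
exists [seq (c i, i) | i <- iota 0 n]; first by move=> q /mapP [i _ ->].
by rewrite big_map -(big_mkord xpredT) /index_iota subn0.
Qed.

Lemma homog_component (l : seq (A * nat)) d x : homog_seq l -> G d x ->
  x = \sum_(q <- l) q.1 -> forall e, \sum_(q <- l | q.2 == e) q.1 = if e == d then x else 0.
Proof.
move=> hl hx hsum.
pose n := (maxn d (\max_(q <- l) q.2)).+1.
have hlt q : q \in l -> (q.2 < n)%N.
  by move=> hq; rewrite ltnS leq_max (leq_bigmax_seq q hq) ?orbT.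
have hd : (d < n)%N by rewrite ltnS leq_maxl.
pose c e := \sum_(q <- l | q.2 == e) q.1 - (if e == d then x else 0).
have hc e : G e (c e).
  apply: gradedD; first by apply: graded_sum => q hq /eqP <-; apply: hl.
  by apply: gradedN; case: eqP => [->|_] //; apply: graded0.
have hs : \sum_(e < n) c e = 0.
  rewrite sumrB -big_mkcond /= (big_ord1_eq _ (fun _ => x)) hd -[in RHS](subrr x).
  congr (_ - _); rewrite [RHS]hsum.
  under eq_bigr do rewrite big_mkcond.
  rewrite exchange_big /= big_seq [RHS]big_seq; apply: eq_bigr => q hq.
  rewrite -big_mkcond /=; under eq_bigl do rewrite eq_sym.
  by rewrite (big_ord1_eq _ (fun _ => q.1)) hlt.
move=> e; have [he|he] := ltnP e n.
  by apply/eqP; rewrite -subr_eq0; apply/eqP; apply: graded_direct hc hs _ he.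
rewrite big1_seq => [|q /andP [/eqP qe /hlt hq]]; last by move: he; rewrite -qe leqNgt hq.
by case: eqP => // ed; move: hd; rewrite -ed ltnNge he.
Qed.

Lemma homog_seq_mul x d l : G d x -> homog_seq l ->
  homog_seq [seq (x * q.1, (d + q.2)%N) | q <- l].
Proof. by move=> hx hl _ /mapP [q /hl hq ->]; apply: gradedM. Qed.

Lemma homog_pos_max d x : (0 < d)%N -> G d x -> M x.
Proof.
move=> hd hx; apply: contrapT => /unit_notin_M [u hu].
have [l hl e1] := homog_decomp 1.
have hx1 : x = \sum_(q <- [seq (x * q.1, (d + q.2)%N) | q <- l]) q.1.
  by rewrite big_map -mulr_sumr -e1 mulr1.
have := homog_component (homog_seq_mul hx hl) hx hx1 d; rewrite eqxx big_map.
under eq_bigl do rewrite /= -{2}[d]addn0 eqn_add2l.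
rewrite -mulr_sumr => hxe0.
have h1 : G 0 1.
  have -> : 1 = \sum_(q <- l | q.2 == 0%N) q.1 by rewrite -hu -{1}hxe0 mulrAC hu mul1r.
  by apply: graded_sum => q hq /eqP <-; apply: hl.
have [l2 hl2 e2] := homog_decomp u.
have h1' : 1 = \sum_(q <- [seq (x * q.1, (d + q.2)%N) | q <- l2]) q.1.
  by rewrite big_map -mulr_sumr -e2 hu.
have := homog_component (homog_seq_mul hx hl2) h1 h1' 0; rewrite eqxx big_map big_pred0.
  by move/esym/eqP; rewrite oner_eq0.
by move=> q /=; rewrite addn_eq0 (negbTE (lt0n_neq0 hd)).
Qed.

Section Generators.
Variable S : A -> Prop.
Hypotheses (S_deg1 : forall x, S x -> G 1 x) (M_gen : forall z, M z <-> gen_by S z).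

Lemma homog_ideal_pow n x : G n x -> 'M^n x.
Proof.
elim: n x => [|n IH] x hx //.
pose P z := exists2 l : seq (A * nat),
  (forall q, q \in l -> G q.2 q.1 /\ (q.2 = n.+1 -> 'M^n.+1 q.1)) & z = \sum_(q <- l) q.1.
have P_add y z : P y -> P z -> P (y + z).
  move=> [l1 h1 ->] [l2 h2 ->]; exists (l1 ++ l2); last by rewrite big_cat.
  by move=> q; rewrite mem_cat => /orP [/h1 | /h2].
have P_mulS a w : S w -> P (a * w).
  move=> hw; have [l hl ->] := homog_decomp a.
  exists [seq (q.1 * w, (q.2 + 1)%N) | q <- l]; last by rewrite big_map mulr_suml.
  move=> _ /mapP [q /hl hq ->] /=; split; first exact: gradedM hq (S_deg1 hw).
  rewrite addn1 => -[hq2]; rewrite mulrC; apply: ideal_powS; first by apply/M_gen/gen_by_mem.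
  by apply: IH; rewrite -hq2.
have [l [hl hxe]] := proj1 (M_gen x) (homog_pos_max (ltn0Sn n) hx).
have : P x.
  rewrite hxe big_seq; apply: big_ind => // [|p /hl]; last exact: P_mulS.
  by exists [::]; rewrite ?big_nil.
move=> [l' hl' e']; have := homog_component (fun q hq => (hl' q hq).1) hx e' n.+1.
rewrite eqxx => <-; apply: ideal_sum => [|q /hl' [_ h] /eqP /h //].
exact: ideal_pow_ideal.
Qed.

Definition high_deg k z := exists2 l : seq (A * nat),
  (forall q, q \in l -> G q.2 q.1 /\ (k <= q.2)%N) & z = \sum_(q <- l) q.1.

Lemma ideal_high_deg k : ideal (high_deg k).
Proof.
have hd0 : high_deg k 0 by exists [::]; rewrite ?big_nil.
have hdD x y : high_deg k x -> high_deg k y -> high_deg k (x + y).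
  move=> [l1 h1 ->] [l2 h2 ->]; exists (l1 ++ l2); last by rewrite big_cat.
  by move=> q; rewrite mem_cat => /orP [/h1 | /h2].
split; [|split] => // a _ [l hl ->]; rewrite mulr_sumr big_seq.
apply: big_ind => // q /hl [hq hkq]; have [la hla ->] := homog_decomp a.
exists [seq (r.1 * q.1, (r.2 + q.2)%N) | r <- la]; last by rewrite big_map mulr_suml.
by move=> _ /mapP [r /hla hr ->]; split; [apply: gradedM | apply: leq_trans hkq (leq_addl _ _)].
Qed.

Lemma high_deg_mul_deg1 k w z : G 1 w -> high_deg k z -> high_deg k.+1 (w * z).
Proof.
move=> hw [l hl ->]; exists [seq (w * q.1, (1 + q.2)%N) | q <- l]; last first.
  by rewrite big_map mulr_sumr.
by move=> _ /mapP [q /hl [hq hkq] ->]; split; [apply: gradedM | rewrite add1n ltnS].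
Qed.

Lemma ideal_pow_high_deg k : 'M^k `<=` high_deg k.
Proof.
elim: k => [|k IH] z.
  by move=> _; have [l hl ->] := homog_decomp z; exists l => // q /hl.
move=> [l [hl ->]]; apply: ideal_sum => [|p /hl [/M_gen [l1 [hl1 ->]] /IH hp2] _].
  exact: ideal_high_deg.
rewrite mulr_suml; apply: ideal_sum => [|r /hl1 hr _]; first exact: ideal_high_deg.
rewrite -mulrA; apply: idealM; first exact: ideal_high_deg.
exact: high_deg_mul_deg1 (S_deg1 hr) hp2.
Qed.

Lemma top_pow_homog z : 'M^t z -> G t z.
Proof.
move=> /ideal_pow_high_deg [l hl ->]; apply: graded_sum => q /hl [hq] + _.
rewrite leq_eqVlt => /orP [/eqP -> // | /ideal_pow_anti hlt].
by rewrite (ideal_pow_eq0 (hlt _ (homog_ideal_pow hq))); apply: graded0.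
Qed.

Lemma homog_notin_sq_deg1 n y :
  (forall x, G 0 x -> x != 0 -> exists x', G 0 x' /\ x * x' = 1) ->
  G n y -> M y -> ~ 'M^2 y -> G 1 y.
Proof.
move=> G0_unit; case: n => [|[|n]] hy hyM hy2 //.
  have y_neq0 : y != 0.
    by apply/eqP => y0; apply: hy2; rewrite y0; apply: ideal0; apply: ideal_pow_ideal.
  by have [y' [_ /unit_notin_max]] := G0_unit y hy y_neq0.
by case: hy2; apply: (@ideal_pow_anti 2 n.+2) => //; apply: homog_ideal_pow.
Qed.

(* [v = x y] is homogeneous of degree [t], so the degree [t - 1] part of [x] does not kill [y]. *)
Lemma deg1_mul_pow_neq0 y : (0 < t)%N -> G 1 y -> y <> 0 ->
  exists z, 'M^t.-1 z /\ z * y <> 0.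
Proof.
move=> ht hy hy0.
have hvt : 'M^t v by apply/pow_top_socleE; exists 1; rewrite mul1r.
have [x hvx] : principal y v.
  apply: socle_gen_mem; first exact: ideal_principal.
  by exists y; split => //; exists 1; rewrite mul1r.
have [l hl hxe] := homog_decomp x.
have hs : v = \sum_(q <- [seq (y * q.1, (1 + q.2)%N) | q <- l]) q.1.
  by rewrite big_map -mulr_sumr -hxe hvx mulrC.
have := homog_component (homog_seq_mul hy hl) (top_pow_homog hvt) hs t.
rewrite eqxx big_map /= => hsum.
apply: contrapT => /forallNP hno; apply: v_neq0.
rewrite -hsum big1_seq // => q /andP [/eqP hq2 /hl hq].
rewrite mulrC; apply: contrapT => hz; apply: (hno q.1); split => //.
by apply: homog_ideal_pow; rewrite -hq2 add1n.
Qed.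

End Generators.

End Graded.

Lemma quot_exponent_ann_factor i p q : (i <= t)%N -> 'M^i p -> 'M^(t - i) q -> v = p * q ->
  quot_exponent (ann_ideal (principal p)) (t.+1 - i).
Proof.
move=> it hp hq hv.
have hI1 : ~ ann_ideal (principal p) 1.
  by move/ann_principal; rewrite mul1r => p0; apply: v_neq0; rewrite hv p0 mul0r.
apply/(quot_exponentP _ (ideal_ann (principal p)) hI1); split=> [a ha | r hr].
  apply/ann_principal; apply: ideal_pow_eq0.
  by have := ideal_pow_mul ha hp; rewrite subnK // leqW.
rewrite leqNgt; apply/negP => rt; apply: v_neq0; rewrite hv mulrC; apply/ann_principal.
by apply: hr; apply: ideal_pow_anti hq; lia.
Qed.

(* A unit [d i] would give [I i = I (i - 1)], where [I 0 = 0]. *)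
Lemma chain_factor_max (I : nat -> A -> Prop) (d : nat -> A) :
  (exists z, I 1%N z /\ z <> 0) ->
  (forall i, (1 <= i < t)%N -> exists z, I i.+1 z /\ ~ I i z) ->
  (forall i, (1 <= i <= t)%N ->
     forall z, I i z <-> ann_ideal (principal (\prod_(1 <= j < i.+1) d j)) z) ->
  forall i, (1 <= i <= t)%N -> M (d i).
Proof.
move=> hI1 hchain hIp i /andP [i1 it]; apply: contrapT => /unit_notin_M [e he].
pose p k := \prod_(1 <= j < k.+1) d j.
have annP k : (1 <= k <= t)%N -> forall z, I k z <-> z * p k = 0.
  by move=> hk z; rewrite hIp //; apply: ann_principal.
have kill z : z * p i = 0 -> z * p i.-1 = 0.
  have -> : p i = p i.-1 * d i by rewrite /p big_nat_recr //= prednK.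
  by rewrite mulrA => h; rewrite -[LHS]mulr1 -he mulrA h mul0r.
case: i i1 it he kill => [|[|k]] // _ it he kill.
  have h1t : (1 <= 1 <= t)%N by rewrite leqnn.
  have [z [/(annP 1%N h1t) /kill hz hz0]] := hI1.
  by apply: hz0; rewrite -hz /p big_geq ?mulr1.
have [|z [hz]] := hchain k.+1; first by apply/andP; split; last exact: it.
apply; apply/(annP k.+1); first by apply/andP; split; last exact: ltnW.
by apply: kill; apply/(annP k.+2) => //; apply/andP.
Qed.

Lemma chain_factors (I : nat -> A -> Prop) (d : nat -> A) :
  (exists z, I 1%N z /\ z <> 0) ->
  (forall i, (1 <= i < t)%N -> exists z, I i.+1 z /\ ~ I i z) ->
  v = \prod_(1 <= j < t.+1) d j ->
  (forall i, (1 <= i <= t)%N ->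
     forall z, I i z <-> ann_ideal (principal (\prod_(1 <= j < i.+1) d j)) z) ->
  forall i, (1 <= i <= t)%N -> [/\ M (d i), ~ 'M^2 (d i) & quot_exponent (I i) (t.+1 - i)].
Proof.
move=> hI1 hchain hv hIp.
have dM := chain_factor_max hI1 hchain hIp.
pose p i := \prod_(1 <= j < i.+1) d j.
have pS i : (0 < i)%N -> p i = p i.-1 * d i by move=> i0; rewrite /p big_nat_recr //= prednK.
have hpow i k : (1 <= i)%N -> (i + k <= t.+1)%N -> 'M^k (\prod_(i <= j < i + k) d j).
  move=> i1 ikt; apply: prod_ideal_pow => j /andP [ij jik]; apply: dM.
  by apply/andP; split; lia.
move=> i hi; have [i1 it] := andP hi.
have hp' : 'M^i.-1 (p i.-1).
  by have := hpow 1%N i.-1 isT; rewrite /p add1n prednK //; apply; lia.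
have hq : 'M^(t - i) (\prod_(i.+1 <= j < t.+1) d j).
  by have := hpow i.+1 (t - i)%N isT; rewrite addSn subnKC //; apply.
have hv_split : v = p i * \prod_(i.+1 <= j < t.+1) d j by rewrite hv /p -big_cat_nat.
split; first exact: dM.
  move=> hd2; apply: v_neq0; apply: ideal_pow_eq0.
  have -> : t.+1 = (i.-1 + 2 + (t - i))%N by lia.
  by rewrite hv_split pS //; apply: ideal_pow_mul => //; apply: ideal_pow_mul.
have -> : I i = ann_ideal (principal (p i)) by apply/predeqP; apply: hIp.
apply: quot_exponent_ann_factor it _ hq hv_split.
rewrite (pS i i1) -[i in 'M^i]prednK // -addn1.
by apply: ideal_pow_mul => //; apply/ideal_pow1/dM.
Qed.

Definition socle_gen_mod I w :=
  [/\ ~ I w, socle_mod I w & forall a, socle_mod I a -> exists c, I (a - c * w)].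

Lemma gorenstein_quotient_socle I : gorenstein_ideal I -> exists w, socle_gen_mod I w.
Proof.
move=> [hI [hI1 [B [f [MB [[f_surj f_ker] [_ [hloc [_ [xB [xB_neq0 hxB]]]]]]]]]]].
have hMB := quotient_max_ideal f_surj hI hI1 f_ker hloc.
have [w hw] := f_surj xB.
have xB_socle : ann_ideal MB xB by apply/hxB; exists 1; rewrite mul1r.
exists w; split.
- by move=> /f_ker; rewrite hw => xB0; rewrite xB0 eqxx in xB_neq0.
- by move=> m hm; apply/f_ker; rewrite rmorphM hw; apply: xB_socle; rewrite hMB; exists m.
move=> a ha; have [c0 hc0] : principal xB (f a).
  by apply/hxB => x; rewrite hMB => -[m hm <-]; rewrite -rmorphM; apply/f_ker; apply: ha.
have [c hc] := f_surj c0; exists c; apply/f_ker.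
by rewrite rmorphB rmorphM hc hw hc0 subrr.
Qed.

(* [0 : I] and [yA + M (0 : I)] have the same annihilator [I], hence coincide;
   conclude by Nakayama. *)
Lemma ann_principal_of_socle_gen I w : ideal I -> socle_gen_mod I w ->
  exists2 y, (forall z, ann_ideal I z <-> principal y z) & w * y <> 0.
Proof.
move=> hI [hwI hwM hsoc].
have [y hyI hwy] : exists2 y, ann_ideal I y & w * y <> 0.
  apply: contrapT => /forallPNP hno; apply: hwI; apply: ann_ann_sub => // y hy.
  exact: contrapT (hno y hy).
pose J := adjoin (prod_ideal M (ann_ideal I)) y.
have hJ : ideal J := ideal_adjoin y (ideal_prod M (ideal_ann I)).
have annJ : ann_ideal J `<=` I.
  move=> u hu.
  have huy : u * y = 0 by apply: hu; apply: adjoin_mem; apply: ideal_prod; apply: ideal_ann.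
  have [c hc] : exists c, I (u - c * w).
    apply: hsoc => m hm; apply: ann_ann_sub => // k hk.
    by rewrite -mulrA; apply: hu; apply: adjoin_sub; apply: prod_ideal_mul.
  have hcwy : c * (w * y) = 0.
    have -> : c * (w * y) = u * y - y * (u - c * w) by ring.
    by rewrite huy hyI // subrr.
  have hcM : M c.
    apply: contrapT => /unit_notin_M [c' hc']; apply: hwy.
    by rewrite -[w * y]mul1r -hc' mulrAC hcwy mul0r.
  have -> : u = (u - c * w) + w * c by rewrite mulrC subrK.
  by apply: idealD => //; apply: hwM.
have hK : ann_ideal I `<=` J by move=> z hz; apply: (ann_ann_sub hJ) => u /annJ; apply: hz.
exists y => // z; split; first exact: nakayama_principal (ideal_ann I) hK z.
by move=> [a ->] x hx; rewrite -mulrA hyI // mulr0.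
Qed.

Lemma gorenstein_ideal_ann_principal I : gorenstein_ideal I -> quot_exponent I t ->
  exists y, M y /\ ~ 'M^2 y /\ forall z, ann_ideal I z <-> principal y z.
Proof.
move=> hgor hexp; have [hI [hI1 _]] := hgor.
have [w hw] := gorenstein_quotient_socle hgor.
have [y hy _] := ann_principal_of_socle_gen hI hw.
have [hMtI hmin] := (quot_exponentP _ hI hI1).1 hexp.
have hyI : ann_ideal I y by apply/hy; exists 1; rewrite mul1r.
exists y; split; [|split] => //.
  apply: contrapT => /unit_notin_M [y' hy']; apply: v_neq0.
  have hvI : I v by apply: hMtI; apply/pow_top_socleE; exists 1; rewrite mul1r.
  by rewrite -[v]mul1r -hy' mulrAC hyI // mul0r.
move=> hy2; have t_gt0 : (0 < t)%N.
  by rewrite lt0n; apply/eqP => t0; apply: hI1; apply: hMtI; rewrite t0.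
suff /hmin : 'M^t.-1 `<=` I by rewrite leqNgt ltn_predL t_gt0.
move=> a ha; apply: ann_ann_sub => // _ /hy [c ->].
rewrite mulrCA (ideal_pow_eq0 (_ : 'M^t.+1 (a * y))) ?mulr0 //.
by rewrite -(prednK t_gt0) -addn2; apply: ideal_pow_mul.
Qed.

Lemma graded_quot_exponent G S y n : graded G ->
  (forall x, G 0 x -> x != 0 -> exists x', G 0 x' /\ x * x' = 1) ->
  (forall x, S x -> G 1 x) -> (forall z, M z <-> gen_by S z) ->
  G n y -> minimal_generator M y -> quot_exponent (ann_ideal (principal y)) t.
Proof.
move=> gradedG G0_unit S_deg1 M_gen hyn /minimal_generator_notin_sq [hyM hy2].
have y_neq0 : y <> 0 by move=> y0; apply: hy2; rewrite y0; apply: ideal0; apply: ideal_pow_ideal.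
have t_gt0 : (0 < t)%N.
  rewrite lt0n; apply/eqP => t0; apply: y_neq0; apply: ideal_pow_eq0.
  by rewrite t0; apply/ideal_pow1.
have hy1 := homog_notin_sq_deg1 gradedG S_deg1 M_gen G0_unit hyn hyM hy2.
have [z [hz hzy]] := deg1_mul_pow_neq0 gradedG S_deg1 M_gen t_gt0 hy1 y_neq0.
have [a ha] : principal (z * y) v.
  apply: socle_gen_mem; first exact: ideal_principal.
  by exists (z * y); split => //; exists 1; rewrite mul1r.
have := @quot_exponent_ann_factor 1 y (a * z) t_gt0 (proj1 (ideal_pow1 y) hyM).
rewrite subSS subn0; apply; last by rewrite ha mulrA mulrC.
by rewrite subn1; apply: idealM => //; apply: ideal_pow_ideal.
Qed.

End Socle.

End Noetherian.

End Nilpotent.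
End LocalRing.

Unset Implicit Arguments.

Theorem proposition3p6 (A : comNzRingType) (M : A -> Prop) (t : nat) (v : A) :
  gorenstein0 M ->
  is_exponent M t.+1 ->
  (forall z, ann_ideal M z <-> ideal_pow M t z) ->
  (forall z, ideal_pow M t z <-> principal v z) ->
  (* (i) *)
  (forall (I : nat -> A -> Prop) (d : nat -> A),
     (0 < t)%N ->
     (forall i, (1 <= i <= t)%N -> gorenstein_ideal (I i)) ->
     (exists z, I 1%N z /\ z <> 0) ->
     (forall i, (1 <= i < t)%N ->
        (forall z, I i z -> I i.+1 z) /\ exists z, I i.+1 z /\ ~ I i z) ->
     (forall z, I t z <-> M z) ->
     v = \prod_(1 <= j < t.+1) d j ->
     (forall i, (1 <= i <= t)%N ->
        forall z, I i z <-> ann_ideal (principal (\prod_(1 <= j < i.+1) d j)) z) ->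
     (forall i, (1 <= i <= t)%N ->
        M (d i) /\ ~ ideal_pow M 2 (d i) /\ quot_exponent (I i) (t.+1 - i)) /\
     (exists y, minimal_generator M y /\
        forall z, I 1%N z <-> ann_ideal (principal y) z) /\
     quot_exponent (I 1%N) t) /\
  (* (ii)(a) *)
  (forall I : A -> Prop,
     gorenstein_ideal I -> quot_exponent I t ->
     exists y, M y /\ ~ ideal_pow M 2 y /\
       forall z, ann_ideal I z <-> principal y z) /\
  (* (ii)(b) *)
  (forall (G : nat -> A -> Prop) (y : A),
     graded G ->
     (forall x, G 0%N x -> x != 0 -> exists x', G 0%N x' /\ x * x' = 1) ->
     (exists S : A -> Prop, (forall x, S x -> G 1%N x) /\
        forall z, M z <-> gen_by S z) ->
     (exists n, G n y) ->
     minimal_generator M y ->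
     quot_exponent (ann_ideal (principal y)) t).
Proof.
move=> [A_noeth [[ideal_M [M_neq1 unit_notin_M]] [_ [x [x_neq0 socle_x]]]]] [pow_eq0 _].
move=> socle_pow pow_socle.
have socleE z : ann_ideal M z <-> principal v z.
  by split=> [/socle_pow /pow_socle | /pow_socle /socle_pow].
have v_neq0 : v <> 0.
  move=> v0; have [c hc] : principal v x by apply/socleE/socle_x; exists 1; rewrite mul1r.
  by move: x_neq0; rewrite hc v0 mulr0 eqxx.
split; [|split].
- (* Neither the Gorenstein property of the [I i], nor [I i ⊆ I i.+1], nor [I t = M] is needed. *)
  move=> I d t_gt0 _ hI1 hchain _ hv hIp.
  have hfac := chain_factors ideal_M M_neq1 unit_notin_M pow_eq0 v_neq0 hI1
    (fun i hi => (hchain i hi).2) hv hIp.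
  have [d1M d1_notin_sq exp1] := hfac 1%N (introT andP (conj (leqnn 1) t_gt0)).
  split=> [i /hfac [] // | ]; split; last by rewrite subSS subn0 in exp1.
  exists (d 1%N); split.
    exact: (notin_sq_minimal_generator ideal_M unit_notin_M pow_eq0 A_noeth d1M d1_notin_sq).
  by move=> z; rewrite hIp // big_nat1.
- exact: (gorenstein_ideal_ann_principal ideal_M M_neq1 unit_notin_M pow_eq0 A_noeth
    socleE v_neq0 pow_socle).
- move=> G y gradedG G0_unit [S [S_deg1 M_gen]] [n hyn].
  exact: (graded_quot_exponent ideal_M M_neq1 unit_notin_M pow_eq0 socleE v_neq0 pow_socle
    gradedG G0_unit S_deg1 M_gen hyn).
Qed.
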